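(* Let $\mathbb R^n$ and $\mathbb R_+=[0,\infty)$ carry the bounded coarse structures of their Euclidean metrics and let $\mathbb R^n\times\mathbb R_+$ carry the product coarse structure. Then the inclusion $i\colon\mathbb R_+\to\mathbb R^n\times\mathbb R_+$, $i(s)=(0,s)$, is a coarse homotopy-equivalence.
   Context: The bounded coarse structure on a metric space has as entourages the subsets of the sets $D_R=\{(x,y):d(x,y)<R\}$. The product coarse structure on $X\times Y$ has as entourages the subsets of finite unions of finite compositions of sets $M\times N$ with $M$, $N$ entourages of $X$, $Y$ (composition $M_1M_2=\{(x,z):\exists y,(x,y)\in M_1,(y,z)\in M_2\}$). In a coarse space, $M(x)=\{y:(y,x)\in M\}$ and a bounded set is one contained in some $M(x)$; a coarse map carries entourages into entourages and has bounded preimages of bounded sets. A generalised ray is $[0,\infty)$ with a unital coarse structure (diagonal contained in an entourage) such that entourages are open and bounded sets have compact closure. A coarse homotopy is a map $F\colon X\times R\to Y$ with $R$ a generalised ray such that $(x,t)\mapsto(F(x,t),t)$ is a coarse map $X\times R\to Y\times R$; for every bounded $B\subseteq X$ there is $T\in R$ such that for $x\in B$, $t\mapsto F(x,t)$ is constant for $t\ge T$; and $x\mapsto\lim_{t\to\infty}F(x,t)$ is coarse. Two coarse maps are coarsely homotopic if joined by a finite chain of pairs $F(-,0),F(-,\infty)$; a coarse map $f\colon X\to Y$ is a coarse homotopy-equivalence if there is a coarse $g\colon Y\to X$ with $g\circ f$ and $f\circ g$ coarsely homotopic to the identities. *)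

From HB Require Import structures.
From mathcomp Require Import all_boot all_order all_algebra.
From mathcomp Require Import all_classical all_reals all_analysis.
From Stdlib Require Import Relation_Operators.
Set Implicit Arguments.
Unset Strict Implicit.
Unset Printing Implicit Defensive.
Import Order.TTheory GRing.Theory Num.Theory.
Import numFieldTopology.Exports.
Local Open Scope classical_set_scope.
Local Open Scope ring_scope.

Definition coarse_str (X : Type) := set (set (X * X)).

Definition ecomp {X : Type} (M1 M2 : set (X * X)) : set (X * X) :=
  [set p | exists y, M1 (p.1, y) /\ M2 (y, p.2)].

Definition einv {X : Type} (M : set (X * X)) : set (X * X) :=
  [set p | M (p.2, p.1)].

Definition ediag (X : Type) : set (X * X) := [set p | p.1 = p.2].

(* compn F n = F 0 F 1 ... F n  (a composition of n.+1 sets) *)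
Fixpoint compn {X : Type} (F : nat -> set (X * X)) (n : nat) : set (X * X) :=
  match n with
  | 0%N => F 0%N
  | k.+1 => ecomp (compn F k) (F k.+1)
  end.

Definition eprod {X Y : Type} (M : set (X * X)) (N : set (Y * Y))
  : set ((X * Y) * (X * Y)) :=
  [set p | M (p.1.1, p.2.1) /\ N (p.1.2, p.2.2)].

Definition metric_coarse {R : realType} {X : Type} (d : X -> X -> R)
  : coarse_str X :=
  [set E | exists r : R, E `<=` [set p | d p.1 p.2 < r]].

(* product coarse structure: subsets of finite unions of finite
   compositions of sets M x N, M, N entourages *)
Definition prod_coarse {X Y : Type} (CX : coarse_str X) (CY : coarse_str Y)
  : coarse_str (X * Y) :=
  [set E | exists (k : nat) (m : nat -> nat)
              (M : nat -> nat -> set (X * X)) (N : nat -> nat -> set (Y * Y)),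
     (forall i j, (i < k)%N -> (j <= m i)%N -> CX (M i j) /\ CY (N i j)) /\
     E `<=` [set p | exists2 i, (i < k)%N &
                        compn (fun j => eprod (M i j) (N i j)) (m i) p]].

Definition esec {X : Type} (M : set (X * X)) (x : X) : set X :=
  [set y | M (y, x)].

Definition cbounded {X : Type} (CX : coarse_str X) (B : set X) : Prop :=
  exists M x, CX M /\ B `<=` esec M x.

Definition coarse_map {X Y : Type} (CX : coarse_str X) (CY : coarse_str Y)
  (f : X -> Y) : Prop :=
  (forall E, CX E -> CY ((fun p => (f p.1, f p.2)) @` E)) /\
  (forall B, cbounded CY B -> cbounded CX (f @^-1` B)).

(* axioms of a coarse structure (not necessarily unital) *)
Definition is_coarse_structure {X : Type} (C : coarse_str X) : Prop :=
  [/\ (forall E F, C E -> F `<=` E -> C F),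
      (forall E F, C E -> C F -> C (E `|` F)),
      (forall E, C E -> C (einv E)) &
      (forall E F, C E -> C F -> C (ecomp E F))].

Definition unital {X : Type} (C : coarse_str X) : Prop :=
  exists2 E, C E & @ediag X `<=` E.

Notation Rplus R := (set_type [set x : R | 0 <= x]).

Lemma Rplus0_subproof (R : realType) : (0 : R) \in [set x : R | 0 <= x].
Proof. by rewrite inE /=. Qed.

Definition rp0 (R : realType) : Rplus R := exist _ 0 (Rplus0_subproof R).

Definition generalised_ray {R : realType} (C : coarse_str (Rplus R)) : Prop :=
  [/\ is_coarse_structure C, unital C,
      (forall E, C E -> exists U, [/\ C U, open U & E `<=` U]) &
      (forall B, cbounded C B -> compact (closure B))].

(* coarse homotopy F : X x R -> Y from f0 = F(-,0) to finf = F(-,oo) *)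
Definition coarse_homotopy {R : realType} {X Y : Type}
  (CX : coarse_str X) (CY : coarse_str Y) (CR : coarse_str (Rplus R))
  (F : X * Rplus R -> Y) (f0 finf : X -> Y) : Prop :=
  generalised_ray CR /\
  [/\ coarse_map (prod_coarse CX CR) (prod_coarse CY CR)
                 (fun p => (F p, p.2)),
      (forall B, cbounded CX B -> exists T : Rplus R,
          forall x t, B x -> val T <= val t -> F (x, t) = F (x, T)),
      (forall x, F (x, rp0 R) = f0 x),
      (forall x, exists T : Rplus R, forall t, val T <= val t -> F (x, t) = finf x) &
      coarse_map CX CY finf].

Definition homotopy_step (R : realType) {X Y : Type}
  (CX : coarse_str X) (CY : coarse_str Y) (f g : X -> Y) : Prop :=
  exists (CR : coarse_str (Rplus R)) (F : X * Rplus R -> Y),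
    coarse_homotopy CX CY CR F f g.

Definition coarsely_homotopic (R : realType) {X Y : Type}
  (CX : coarse_str X) (CY : coarse_str Y) (f g : X -> Y) : Prop :=
  clos_refl_sym_trans (X -> Y) (homotopy_step R CX CY) f g.

Definition coarse_homotopy_equivalence (R : realType) {X Y : Type}
  (CX : coarse_str X) (CY : coarse_str Y) (f : X -> Y) : Prop :=
  coarse_map CX CY f /\
  exists g : Y -> X, [/\ coarse_map CY CX g,
     coarsely_homotopic R CX CX (g \o f) id &
     coarsely_homotopic R CY CY (f \o g) id].

Definition euclid_dist {R : realType} (n : nat) (x y : 'rV[R]_n) : R :=
  Num.sqrt (\sum_(i < n) (x ord0 i - y ord0 i) ^+ 2).

Definition Rn_coarse (R : realType) (n : nat) : coarse_str 'rV[R]_n :=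
  metric_coarse (@euclid_dist R n).

Definition Rplus_coarse (R : realType) : coarse_str (Rplus R) :=
  metric_coarse (fun s t : Rplus R => `|val s - val t| : R).

Definition incl_ray (R : realType) (n : nat) (s : Rplus R) : 'rV[R]_n * Rplus R :=
  (0, s).

(* The map r (x, s) := s + |x|_oo is a coarse left inverse of the inclusion
   s |-> (0, s), and i o r (x, s) = (0, s + |x|_oo) is joined to the identity by
   the homotopy whose time-t map soft-thresholds every coordinate of x by t
   (moving it towards 0 by at most t) and raises s by min(|x|_oo, t).  This
   homotopy is 3-Lipschitz in (x, s, t), proper, and freezes once t >= |x|_oo,
   so the standard ray [0, oo) serves as its generalised ray.  All coarse
   conditions become metric estimates, because the product of two bounded
   coarse structures is the bounded coarse structure of the max-metric and the
   Euclidean and sup metrics on R^n are coarsely equivalent. *)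

From mathcomp Require Import all_boot all_order all_algebra all_classical all_reals all_analysis.
From mathcomp Require Import Rstruct lra.
From Stdlib Require Import Relation_Operators.
Set Implicit Arguments.
Unset Strict Implicit.
Import Order.TTheory GRing.Theory Num.Theory numFieldTopology.Exports.
Local Open Scope classical_set_scope.
Local Open Scope ring_scope.

Section MetricCoarse.
Variable R : realType.
Implicit Types (T X Y Z : Type).

Definition triangle {T} (d : T -> T -> R) := forall x y z, d x z <= d x y + d y z.

Definition dmax {X Y} (dX : X -> X -> R) (dY : Y -> Y -> R) (p q : X * Y) : R :=
  Num.max (dX p.1 q.1) (dY p.2 q.2).

Lemma dmax_lt {X Y} (dX : X -> X -> R) (dY : Y -> Y -> R) p q r :
  dmax dX dY p q < r <-> dX p.1 q.1 < r /\ dY p.2 q.2 < r.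
Proof. by rewrite /dmax gt_max; split => [/andP|[-> ->]]. Qed.

Lemma triangle_dmax {X Y} (dX : X -> X -> R) (dY : Y -> Y -> R) :
  triangle dX -> triangle dY -> triangle (dmax dX dY).
Proof.
move=> tX tY p q s; rewrite /dmax ge_max; apply/andP; split.
- by apply: le_trans (tX _ q.1 _) _; apply: lerD; rewrite le_max lexx.
- by apply: le_trans (tY _ q.2 _) _; apply: lerD; rewrite le_max lexx ?orbT.
Qed.

Section OneMetric.
Context {T : Type} (d : T -> T -> R).
Implicit Types E F : set (T * T).

Lemma metric_coarse_sub E F : metric_coarse d E -> F `<=` E -> metric_coarse d F.
Proof. by move=> [r Er] FE; exists r => p /FE /Er. Qed.

Lemma metric_coarseU E F :
  metric_coarse d E -> metric_coarse d F -> metric_coarse d (E `|` F).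
Proof.
move=> [r1 E1] [r2 E2]; exists (Num.max r1 r2) => p [/E1|/E2] /= h;
by rewrite lt_max h ?orbT.
Qed.

Lemma metric_coarse_ecomp E F : triangle d ->
  metric_coarse d E -> metric_coarse d F -> metric_coarse d (ecomp E F).
Proof.
move=> td [r1 E1] [r2 E2]; exists (r1 + r2) => p [y [/E1 /= h1 /E2 /= h2]].
exact: le_lt_trans (td _ y _) (ltrD h1 h2).
Qed.

Lemma metric_coarse_compn (F : nat -> set (T * T)) m : triangle d ->
  (forall j, (j <= m)%N -> metric_coarse d (F j)) -> metric_coarse d (compn F m).
Proof.
move=> td; elim: m => [|m IH] hF /=; first exact: hF.
apply: metric_coarse_ecomp => //; last exact: hF.
by apply: IH => j jm; apply: hF; rewrite leqW.
Qed.

Lemma metric_coarse_bigcup (P : nat -> set (T * T)) k :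
  (forall i, (i < k)%N -> metric_coarse d (P i)) ->
  metric_coarse d [set p | exists2 i, (i < k)%N & P i p].
Proof.
elim: k => [|k IH] hP; first by exists 0 => p [].
apply: (@metric_coarse_sub (_ `|` P k)); first apply: metric_coarseU.
- by apply: IH => i ik; apply: hP; rewrite ltnW.
- exact: hP.
move=> p [i]; rewrite ltnS leq_eqVlt => /orP[/eqP -> | ik] Pp; first by right.
by left; exists i.
Qed.

Lemma metric_coarse_structure : (forall x y, d x y = d y x) -> triangle d ->
  is_coarse_structure (metric_coarse d).
Proof.
move=> dC td; split.
- exact: metric_coarse_sub.
- exact: metric_coarseU.
- by move=> E [r Er]; exists r => p /Er /=; rewrite dC.
- by move=> E F; exact: metric_coarse_ecomp.
Qed.

Lemma metric_coarse_unital : (forall x, d x x = 0) -> unital (metric_coarse d).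
Proof.
move=> d0; exists [set p | d p.1 p.2 < 1]; first by exists 1.
by move=> p /= ->; rewrite d0.
Qed.

Lemma metric_cbounded B :
  cbounded (metric_coarse d) B <-> exists c r, B `<=` [set y | d y c < r].
Proof.
split; first by move=> [M [x [[r Mr] BM]]]; exists x, r => y /BM /Mr.
by move=> [c [r Br]]; exists [set p | d p.1 p.2 < r], c; split => //; exists r.
Qed.

End OneMetric.

Lemma eq_metric_coarse {T} (d1 d2 : T -> T -> R) :
  (forall r, exists r', forall x y, d1 x y < r -> d2 x y < r') ->
  (forall r, exists r', forall x y, d2 x y < r -> d1 x y < r') ->
  metric_coarse d1 = metric_coarse d2.
Proof.
have sub (e1 e2 : T -> T -> R) :
    (forall r, exists r', forall x y, e1 x y < r -> e2 x y < r') ->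
    forall E, metric_coarse e1 E -> metric_coarse e2 E.
  by move=> h E [r Er]; have [r' hr'] := h r; exists r' => p /Er /hr'.
by move=> h12 h21; apply/funext => E; apply/propext; split; apply: sub.
Qed.

Lemma metric_coarse_eprod {X Y} (dX : X -> X -> R) (dY : Y -> Y -> R) M N :
  metric_coarse dX M -> metric_coarse dY N -> metric_coarse (dmax dX dY) (eprod M N).
Proof.
move=> [a Ma] [b Nb]; exists (Num.max a b) => p [/Ma /= pa /Nb /= pb].
by apply/dmax_lt; rewrite !lt_max pa pb orbT.
Qed.

Lemma prod_metric_coarse {X Y} (dX : X -> X -> R) (dY : Y -> Y -> R) :
  triangle dX -> triangle dY ->
  prod_coarse (metric_coarse dX) (metric_coarse dY) = metric_coarse (dmax dX dY).
Proof.
move=> tX tY; apply/funext => E; apply/propext; split.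
  move=> [k [m [M [N [hMN EU]]]]]; apply: metric_coarse_sub EU.
  apply: metric_coarse_bigcup => i ik.
  apply: metric_coarse_compn; first exact: triangle_dmax.
  by move=> j jm; have [hM hN] := hMN i j ik jm; exact: metric_coarse_eprod.
move=> [r Er]; exists 1%N, (fun=> 0%N),
  (fun _ _ => [set p | dX p.1 p.2 < r]), (fun _ _ => [set p | dY p.1 p.2 < r]).
split; first by move=> i j _ _; split; exists r.
by move=> p /Er /dmax_lt pr; exists 0%N.
Qed.

Lemma metric_coarse_map {X Y} (dX : X -> X -> R) (dY : Y -> Y -> R) (f : X -> Y) :
  (forall r, exists r', forall x y, dX x y < r -> dY (f x) (f y) < r') ->
  (forall c r, exists c' r', forall x, dY (f x) c < r -> dX x c' < r') ->
  coarse_map (metric_coarse dX) (metric_coarse dY) f.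
Proof.
move=> fcontrolled fproper; split.
  move=> E [r Er]; have [r' hr'] := fcontrolled r.
  by exists r' => _ [p /Er Ep <-]; exact: hr'.
move=> B /metric_cbounded [c [r Br]]; apply/metric_cbounded.
by have [c' [r' h]] := fproper c r; exists c', r' => x /Br /h.
Qed.

Lemma coarse_map_comp {X Y Z} (CX : coarse_str X) (CY : coarse_str Y)
  (CZ : coarse_str Z) (f : X -> Y) (g : Y -> Z) :
  coarse_map CX CY f -> coarse_map CY CZ g -> coarse_map CX CZ (g \o f).
Proof.
move=> [f1 f2] [g1 g2]; split; last by move=> B /g2 /f2.
by move=> E /f1 /g1; rewrite image_comp.
Qed.

End MetricCoarse.

Section Ray.
Variable R : realType.
Implicit Types s t : Rplus R.

Definition dray s t : R := `|val s - val t|.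

Lemma Rplus_coarseE : @Rplus_coarse R = metric_coarse dray.
Proof. by []. Qed.

Lemma ray_ge0 s : 0 <= val s.
Proof. by have := valP s; rewrite inE. Qed.

Lemma to_ray_subproof (v : R) : Num.max v 0 \in [set x : R | 0 <= x].
Proof. by rewrite inE /= le_max lexx orbT. Qed.

Definition to_ray (v : R) : Rplus R := exist _ (Num.max v 0) (to_ray_subproof v).

Lemma val_to_ray (v : R) : 0 <= v -> val (to_ray v) = v.
Proof. by move=> v0; rewrite /= max_l. Qed.

Lemma le_val_to_ray (v : R) : v <= val (to_ray v).
Proof. by rewrite /= le_max lexx. Qed.

Lemma to_ray_val s : to_ray (val s) = s.
Proof. by apply: val_inj; rewrite val_to_ray // ray_ge0. Qed.

Lemma triangle_dray : triangle dray.
Proof. by move=> s t u; exact: ler_distD. Qed.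

Lemma continuous_val_ray : continuous (fun s : Rplus R => val s).
Proof. exact: initial_continuous. Qed.

Lemma continuous_to_ray : continuous to_ray.
Proof.
apply: (@continuous_comp_initial _ _ _ set_val) => v.
by apply: (@continuous_max R R id (fun=> 0) v) => //; exact: cvg_cst.
Qed.

Lemma open_dray_lt (r : R) : open [set p : Rplus R * Rplus R | dray p.1 p.2 < r].
Proof.
apply: (@open_comp _ _ (fun p : Rplus R * Rplus R => dray p.1 p.2) [set y | y < r]);
  last exact: open_lt.
move=> p _.
apply: (@continuous_comp _ _ _ (fun p : Rplus R * Rplus R => val p.1 - val p.2) Num.norm);
  last exact: norm_continuous.
apply: continuousB.
- apply: (@continuous_comp _ _ _ fst (fun s : Rplus R => val s));
    [exact: cvg_fst | exact: continuous_val_ray].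
- apply: (@continuous_comp _ _ _ snd (fun s : Rplus R => val s));
    [exact: cvg_snd | exact: continuous_val_ray].
Qed.

Lemma Rplus_bounded_compact B :
  cbounded (@Rplus_coarse R) B -> compact (closure B).
Proof.
move=> /metric_cbounded [c [r Br]].
pose K := [set s : Rplus R | val s <= val c + r].
have BK : B `<=` K.
  move=> s /Br /= h; rewrite /K /=; have := ler_norm (sval s - sval c); lra.
have Kclosed : closed K.
  apply: (@preimage_closed _ _ (fun s : Rplus R => val s) [set v | v <= val c + r]).
    by move=> s _; exact: continuous_val_ray.
  exact: closed_le.
apply: (@subclosed_compact _ _ (to_ray @` `[0, val c + r])).
- exact: closed_closure.
- apply: continuous_compact; last exact: segment_compact.
  by apply: continuous_subspaceT; exact: continuous_to_ray.
- move=> s /(closureS BK); rewrite -(closure_id K).1 // => Ks.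
  by exists (val s); [rewrite /= in_itv /= ray_ge0 | exact: to_ray_val].
Qed.

Lemma Rplus_generalised_ray : generalised_ray (@Rplus_coarse R).
Proof.
split.
- by apply: metric_coarse_structure; [move=> s t; exact: distrC | exact: triangle_dray].
- by apply: metric_coarse_unital => s; rewrite /dray subrr normr0.
- move=> E [r Er]; exists [set p | dray p.1 p.2 < r].
  by split => //; [exists r | exact: open_dray_lt].
- exact: Rplus_bounded_compact.
Qed.

End Ray.

Section RowNorm.
Variables (R : realType) (n : nat).
Implicit Types x y : 'rV[R]_n.

Lemma norm_row_coord_le x i : `|x ord0 i| <= `|x|.
Proof. by rewrite [leRHS]/Num.Def.normr /= mx_normrE (le_bigmax _ _ (ord0, i)). Qed.

Lemma norm_row_le x (a : R) : 0 <= a -> (forall i, `|x ord0 i| <= a) -> `|x| <= a.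
Proof.
move=> a0 xa; rewrite [leLHS]/Num.Def.normr /= mx_normrE bigmax_le // => -[i j] _.
by rewrite [i]ord1.
Qed.

Lemma triangle_dnorm : triangle (fun x y => `|x - y|).
Proof. by move=> x y z; exact: ler_distD. Qed.

Lemma norm_le_euclid_dist x y : `|x - y| <= euclid_dist x y.
Proof.
apply: norm_row_le => [|i]; first exact: sqrtr_ge0.
rewrite !mxE /euclid_dist -sqrtr_sqr ler_sqrt; last by apply: sumr_ge0 => j _; exact: sqr_ge0.
by rewrite (bigD1 i) //= lerDl; apply: sumr_ge0 => j _; exact: sqr_ge0.
Qed.

Lemma euclid_dist_le_norm x y : euclid_dist x y <= (n%:R + 1) * `|x - y|.
Proof.
have n0 : (0 : R) <= n%:R := ler0n _ n.
have a0 := normr_ge0 (x - y).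
rewrite /euclid_dist -[leRHS]ger0_norm ?mulr_ge0 ?addr_ge0 //.
rewrite -sqrtr_sqr ler_sqrt ?sqr_ge0 //.
have sum_le : \sum_(i < n) (x ord0 i - y ord0 i) ^+ 2 <= n%:R * `|x - y| ^+ 2.
  have coord_le i : (x ord0 i - y ord0 i) ^+ 2 <= `|x - y| ^+ 2.
    rewrite -real_normK ?num_real // lerXn2r ?nnegrE //.
    by have := norm_row_coord_le (x - y) i; rewrite !mxE.
  apply: le_trans (ler_sum _ (fun i _ => coord_le i)) _.
  by rewrite sumr_const card_ord mulr_natl.
by apply: le_trans sum_le _; nra.
Qed.

Lemma Rn_coarseE : @Rn_coarse R n = metric_coarse (fun x y : 'rV[R]_n => `|x - y|).
Proof.
apply: eq_metric_coarse => r.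
- exists r => x y; exact: le_lt_trans (norm_le_euclid_dist x y).
- exists ((n%:R + 1) * r + 1) => x y xy.
  have n0 : (0 : R) <= n%:R := ler0n _ n.
  apply: le_lt_trans (euclid_dist_le_norm x y) _; nra.
Qed.

End RowNorm.

Section SoftThreshold.
Variable R : realType.
Implicit Types a b t u : R.

Definition soft_threshold t a := Num.max (a - t) (Num.min (a + t) 0).

Lemma soft_threshold_cases t a : 0 <= t ->
  [\/ soft_threshold t a = a - t /\ t <= a,
      soft_threshold t a = a + t /\ a <= - t |
      [/\ soft_threshold t a = 0, - t <= a & a <= t]].
Proof.
move=> t0; rewrite /soft_threshold.
case: (leP (a + t) 0) => h1; case: (leP (a - t) _) => h2.
- by apply: Or32; split=> //; lra.
- by apply: Or31; split=> //; lra.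
- by apply: Or33; split=> //; lra.
- by apply: Or31; split=> //; lra.
Qed.

Lemma soft_threshold0 a : soft_threshold 0 a = a.
Proof. by case: (soft_threshold_cases a (lexx 0)) => -[-> *]; lra. Qed.

Lemma soft_threshold_small t a : `|a| <= t -> soft_threshold t a = 0.
Proof.
move=> a_le_t; have t0 := le_trans (normr_ge0 a) a_le_t.
have := a_le_t; rewrite ler_norml => /andP[? ?].
by case: (soft_threshold_cases a t0) => -[-> *] //; lra.
Qed.

Lemma le_norm_soft_threshold t a : 0 <= t -> `|a| <= `|soft_threshold t a| + t.
Proof.
move=> t0; case: (soft_threshold_cases a t0) => -[-> *].
- by rewrite !ger0_norm //; lra.
- by rewrite !ler0_norm //; lra.
- by rewrite normr0 add0r ler_norml; apply/andP; split.
Qed.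

Lemma soft_threshold_lipschitz t u a b : 0 <= t -> 0 <= u ->
  `|soft_threshold t a - soft_threshold u b| <= `|a - b| + `|t - u|.
Proof.
move=> t0 u0.
have ab := ler_norm (a - b); have ba : b - a <= `|a - b| by rewrite distrC ler_norm.
have tu := ler_norm (t - u); have ut : u - t <= `|t - u| by rewrite distrC ler_norm.
rewrite ler_norml.
case: (soft_threshold_cases a t0) => -[-> *];
by case: (soft_threshold_cases b u0) => -[-> *]; apply/andP; split; lra.
Qed.

Lemma min_lipschitz a b t u : `|Num.min a t - Num.min b u| <= `|a - b| + `|t - u|.
Proof.
have ab := ler_norm (a - b); have ba : b - a <= `|a - b| by rewrite distrC ler_norm.
have tu := ler_norm (t - u); have ut : u - t <= `|t - u| by rewrite distrC ler_norm.
rewrite ler_norml; case: (leP a t) => ?; case: (leP b u) => ?;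
by apply/andP; split; lra.
Qed.

End SoftThreshold.

Section Shrink.
Variables (R : realType) (n : nat).
Implicit Types (x y : 'rV[R]_n) (t u : R).

Definition shrink t x : 'rV[R]_n := map_mx (soft_threshold t) x.

Lemma shrink0 x : shrink 0 x = x.
Proof. by apply/rowP => i; rewrite mxE soft_threshold0. Qed.

Lemma shrink_small t x : `|x| <= t -> shrink t x = 0.
Proof.
move=> xt; apply/rowP => i; rewrite !mxE soft_threshold_small //.
exact: le_trans (norm_row_coord_le x i) xt.
Qed.

Lemma le_norm_shrink t x : 0 <= t -> `|x| <= `|shrink t x| + t.
Proof.
move=> t0; apply: norm_row_le => [|i]; first by rewrite addr_ge0.
apply: le_trans (le_norm_soft_threshold _ t0) _; rewrite lerD2r.
by have := norm_row_coord_le (shrink t x) i; rewrite mxE.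
Qed.

Lemma shrink_lipschitz t u x y : 0 <= t -> 0 <= u ->
  `|shrink t x - shrink u y| <= `|x - y| + `|t - u|.
Proof.
move=> t0 u0; apply: norm_row_le => [|i]; first by rewrite addr_ge0.
rewrite !mxE; apply: le_trans (soft_threshold_lipschitz _ _ t0 u0) _.
by rewrite lerD2r; have := norm_row_coord_le (x - y) i; rewrite !mxE.
Qed.

End Shrink.

Section Retraction.
Variables (R : realType) (n : nat).
Local Notation Y := ('rV[R]_n * Rplus R)%type.
Implicit Types (x : 'rV[R]_n) (p : Y) (s t : Rplus R).

Local Notation dY := (dmax (fun x y : 'rV[R]_n => `|x - y|) (@dray R)).

Lemma triangle_dY : triangle dY.
Proof. by apply: triangle_dmax; [exact: triangle_dnorm | exact: triangle_dray]. Qed.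

Lemma Y_coarseE :
  prod_coarse (@Rn_coarse R n) (@Rplus_coarse R) = metric_coarse dY.
Proof.
by rewrite Rn_coarseE Rplus_coarseE prod_metric_coarse //;
  [exact: triangle_dnorm | exact: triangle_dray].
Qed.

Definition retract p : Rplus R := to_ray (val p.2 + `|p.1|).

Lemma val_retract p : val (retract p) = val p.2 + `|p.1|.
Proof. by rewrite val_to_ray // addr_ge0 ?ray_ge0. Qed.

Lemma retract_incl_ray : retract \o @incl_ray R n = id.
Proof. by apply/funext => s; rewrite /comp /retract /= normr0 addr0 to_ray_val. Qed.

Lemma incl_ray_coarse :
  coarse_map (@Rplus_coarse R) (prod_coarse (@Rn_coarse R n) (@Rplus_coarse R))
    (@incl_ray R n).
Proof.
rewrite Y_coarseE Rplus_coarseE; apply: metric_coarse_map.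
- move=> r; exists r => s t st; apply/dmax_lt; split => //=.
  by rewrite subrr normr0; exact: le_lt_trans (normr_ge0 _) st.
- by move=> c r; exists c.2, r => s /dmax_lt[].
Qed.

Lemma retract_coarse :
  coarse_map (prod_coarse (@Rn_coarse R n) (@Rplus_coarse R)) (@Rplus_coarse R)
    retract.
Proof.
rewrite Y_coarseE Rplus_coarseE; apply: metric_coarse_map.
- move=> r; exists (r + r) => p q /dmax_lt[/= xy st].
  rewrite /dray !val_retract opprD addrACA.
  apply: le_lt_trans (ler_normD _ _) (ltrD st _).
  exact: le_lt_trans (ler_dist_dist _ _) xy.
- move=> c r; exists (0, rp0 R), (val c + r) => p; rewrite /dray val_retract => h.
  have p2 := ray_ge0 p.2; have hn := ler_norm (val p.2 + `|p.1| - val c).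
  have x0 := normr_ge0 p.1.
  apply/dmax_lt; rewrite /dray !subr0 ger0_norm //; split; lra.
Qed.

Definition collapse (q : Y * Rplus R) : Y :=
  (shrink (val q.2) q.1.1, to_ray (val q.1.2 + Num.min `|q.1.1| (val q.2))).

Lemma val_collapse2 q : val (collapse q).2 = val q.1.2 + Num.min `|q.1.1| (val q.2).
Proof. by rewrite val_to_ray // addr_ge0 ?ray_ge0 // le_min normr_ge0 ray_ge0. Qed.

Lemma collapse0 p : collapse (p, rp0 R) = p.
Proof.
case: p => x s; rewrite /collapse /= shrink0 min_r // addr0.
by congr (_, _); exact: to_ray_val.
Qed.

Lemma collapse_stable p t : `|p.1| <= val t -> collapse (p, t) = @incl_ray R n (retract p).
Proof. by move=> xt; rewrite /collapse /= shrink_small // min_l. Qed.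

Local Notation dZ := (dmax dY (@dray R)).

Lemma collapse_controlled r :
  exists r', forall q q', dZ q q' < r -> dZ (collapse q, q.2) (collapse q', q'.2) < r'.
Proof.
exists (r + r + r) => -[[x s] t] [[y u] v] /dmax_lt[/dmax_lt[xy su] tv].
rewrite /dray in su tv.
have t0 := ray_ge0 t; have v0 := ray_ge0 v.
have r0 : 0 <= r := le_trans (normr_ge0 _) (ltW tv).
have shrink_le := shrink_lipschitz x y t0 v0.
have min_le := min_lipschitz `|x| `|y| (val t) (val v).
have xy' := le_lt_trans (ler_dist_dist x y) xy.
have sm : `|val s + Num.min `|x| (val t) - (val u + Num.min `|y| (val v))| <=
    `|val s - val u| + `|Num.min `|x| (val t) - Num.min `|y| (val v)|.
  by rewrite opprD addrACA; exact: ler_normD.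
by apply/dmax_lt; split; [apply/dmax_lt; split | ];
  rewrite /dray ?val_collapse2 /=; lra.
Qed.

Lemma collapse_proper c r :
  exists c' r', forall q, dZ (collapse q, q.2) c < r -> dZ q c' < r'.
Proof.
case: c => [[c1 c2] c3].
exists ((0, rp0 R), rp0 R), (`|c1| + val c2 + val c3 + val c3 + r + r + r).
move=> [[x s] t] /dmax_lt[/dmax_lt[xc sc] tc].
rewrite /dray val_collapse2 /= in sc tc.
have t0 := ray_ge0 t; have s0 := ray_ge0 s; have c20 := ray_ge0 c2.
have c30 := ray_ge0 c3; have c10 := normr_ge0 c1.
have m0 : 0 <= Num.min `|x| (val t) by rewrite le_min normr_ge0.
have x_le := le_norm_shrink x t0.
have xc' : `|shrink (val t) x| <= `|shrink (val t) x - c1| + `|c1|.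
  by rewrite -{1}(subrK c1 (shrink _ x)) ler_normD.
have sc' := ler_norm (val s + Num.min `|x| (val t) - val c2).
have tc' := ler_norm (val t - val c3).
(* [/=] turns [val] into [sval] in the goal; [lra] needs the same atoms. *)
simpl in *.
by apply/dmax_lt; split; [apply/dmax_lt; split | ];
  rewrite /dray /= ?subr0 ?ger0_norm //; lra.
Qed.

Lemma collapse_coarse :
  let CY := prod_coarse (@Rn_coarse R n) (@Rplus_coarse R) in
  coarse_map (prod_coarse CY (@Rplus_coarse R)) (prod_coarse CY (@Rplus_coarse R))
    (fun q => (collapse q, q.2)).
Proof.
rewrite /= Y_coarseE Rplus_coarseE prod_metric_coarse;
  [|exact: triangle_dY | exact: triangle_dray].
exact: metric_coarse_map collapse_controlled collapse_proper.
Qed.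

Lemma collapse_homotopy :
  let CY := prod_coarse (@Rn_coarse R n) (@Rplus_coarse R) in
  coarse_homotopy CY CY (@Rplus_coarse R) collapse id (@incl_ray R n \o retract).
Proof.
split; first exact: Rplus_generalised_ray.
split.
- exact: collapse_coarse.
- move=> B; rewrite Y_coarseE => /metric_cbounded[c [r Br]].
  exists (to_ray (`|c.1| + r)) => p t /Br /dmax_lt[pc _] Tt.
  have pT : `|p.1| <= val (to_ray (`|c.1| + r)).
    apply: le_trans (le_val_to_ray _); rewrite addrC -{1}(subrK c.1 p.1).
    by apply: le_trans (ler_normD _ _) _; rewrite lerD2r ltW.
  by rewrite !collapse_stable // (le_trans pT Tt).
- exact: collapse0.
- move=> p; exists (to_ray `|p.1|) => t Tt; apply: collapse_stable.
  exact: le_trans (le_val_to_ray _) Tt.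
- exact: coarse_map_comp retract_coarse incl_ray_coarse.
Qed.

End Retraction.

Theorem mainTheorem5 (n : nat) :
  @coarse_homotopy_equivalence Rdefinitions.R _ _
    (@Rplus_coarse Rdefinitions.R)
    (prod_coarse (@Rn_coarse Rdefinitions.R n) (@Rplus_coarse Rdefinitions.R))
    (@incl_ray Rdefinitions.R n).
Proof.
split; first exact: incl_ray_coarse.
exists (@retract _ n); split.
- exact: retract_coarse.
- by rewrite retract_incl_ray; exact: rst_refl.
- apply/rst_sym/rst_step; exists (@Rplus_coarse _), (@collapse _ n).
  exact: collapse_homotopy.
Qed.
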